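(* Let $A_1,A_2,A_3\subset\mathbb{R}^3$ be finite sets with $|A_1|=3$, $|A_2|=2$, $|A_3|=1$ such that $A_1\cup A_2\cup A_3$ is a set of $6$ points in general position. Then there is a unique triple of mutually orthogonal affine planes $H_1,H_2,H_3$ with $A_i\subset H_i$ for $i=1,2,3$.
   Context: A finite set $X\subset\mathbb{R}^3$ is in general position if no $3$ points of $X$ are collinear, no $4$ are coplanar, no $6$ lie in the union of $2$ orthogonal planes, and no $7$ lie in the union of $3$ mutually orthogonal planes. Affine planes are (mutually) orthogonal if their normal vectors are pairwise orthogonal. *)

From mathcomp Require Import all_boot all_order all_algebra.
From mathcomp Require Import reals.
Set Implicit Arguments. Unset Strict Implicit. Unset Printing Implicit Defensive.
Import Order.TTheory GRing.Theory Num.Theory.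
Local Open Scope ring_scope.

Section Geom.
Variable R : realType.
Notation pt := 'rV[R]_3.

Definition dotv (u v : pt) : R := \sum_(i < 3) u 0 i * v 0 i.

Definition hyperplane (n : pt) (c : R) : pt -> Prop := fun x => dotv n x = c.

Definition is_plane (H : pt -> Prop) : Prop :=
  exists n c, n != 0 /\ forall x, H x <-> hyperplane n c x.

Definition is_line (L : pt -> Prop) : Prop :=
  exists (p d : pt), d != 0 /\ forall x, L x <-> exists t : R, x = p + t *: d.

Definition orth_planes (H1 H2 : pt -> Prop) : Prop :=
  exists n1 c1 n2 c2, [/\ n1 != 0, n2 != 0,
    (forall x, H1 x <-> hyperplane n1 c1 x),
    (forall x, H2 x <-> hyperplane n2 c2 x) & dotv n1 n2 = 0].

Definition mutually_orth3 (H1 H2 H3 : pt -> Prop) : Prop :=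
  [/\ orth_planes H1 H2, orth_planes H1 H3 & orth_planes H2 H3].

Definition no_k_in (k : nat) (X : seq pt) (S : pt -> Prop) : Prop :=
  forall Y : seq pt, uniq Y -> size Y = k -> {subset Y <= X} ->
    ~ (forall y, y \in Y -> S y).

Definition general_position (X : seq pt) : Prop :=
  [/\ uniq X,
      (forall L, is_line L -> no_k_in 3 X L),
      (forall H, is_plane H -> no_k_in 4 X H),
      (forall H1 H2, orth_planes H1 H2 -> no_k_in 6 X (fun x => H1 x \/ H2 x))
    & (forall H1 H2 H3, mutually_orth3 H1 H2 H3 ->
         no_k_in 7 X (fun x => [\/ H1 x, H2 x | H3 x]))].

End Geom.

From mathcomp Require Import all_boot all_order all_algebra.
From mathcomp Require Import reals.
From mathcomp Require Import ring lra.
Import Order.TTheory GRing.Theory Num.Theory.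
Local Open Scope ring_scope.
Set Implicit Arguments. Unset Strict Implicit.

(* The plane through [A1 = {p, q, r}] (not collinear) is forced, with normal
   [N = (q - p) x (r - p)], [x] being the cross product.  The normal of the plane through [A2 = {a, b}] is orthogonal to [N]
   and to [b - a], hence parallel to [n2 = N x (b - a)], which is nonzero: otherwise the plane
   through [a, b, c] would be orthogonal to the first one and together they would contain all
   six points.  The normal of the last plane is orthogonal to [N] and [n2], hence parallel to
   [N x n2], and that plane passes through the point of [A3]. *)

Section Vec3.
Variable R : realType.
Notation pt := 'rV[R]_3.
Implicit Types (u v w x y : pt) (k : R).

Definition i0 : 'I_3 := @Ordinal 3 0 isT.
Definition i1 : 'I_3 := @Ordinal 3 1 isT.
Definition i2 : 'I_3 := @Ordinal 3 2 isT.

Lemma dotvE u v : dotv u v = u 0 i0 * v 0 i0 + u 0 i1 * v 0 i1 + u 0 i2 * v 0 i2.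
Proof.
rewrite /dotv !big_ord_recr big_ord0 /= add0r.
by congr (_ * _ + _ * _ + _ * _); congr (_ _ _); apply/val_inj.
Qed.

Lemma row3P u v : u 0 i0 = v 0 i0 -> u 0 i1 = v 0 i1 -> u 0 i2 = v 0 i2 -> u = v.
Proof.
move=> h0 h1 h2; apply/matrixP => i [[|[|[|j]]] lt_j3]; rewrite [i]ord1 //.
- by have -> : Ordinal lt_j3 = i0 by apply/val_inj.
- by have -> : Ordinal lt_j3 = i1 by apply/val_inj.
- by have -> : Ordinal lt_j3 = i2 by apply/val_inj.
Qed.

(* Locked, as otherwise [mxE] would turn coordinates of [row3] into [if]s that [ring]
   cannot see through. *)
Definition row3_def (a b c : R) : pt :=
  \row_(i < 3) (if i == i0 then a else if i == i1 then b else c).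
Fact row3_key : unit. Proof. by []. Qed.
Definition row3 := locked_with row3_key row3_def.
Lemma row3_0 a b c : row3 a b c 0 i0 = a. Proof. by rewrite /row3 unlock mxE. Qed.
Lemma row3_1 a b c : row3 a b c 0 i1 = b. Proof. by rewrite /row3 unlock mxE. Qed.
Lemma row3_2 a b c : row3 a b c 0 i2 = c. Proof. by rewrite /row3 unlock mxE. Qed.

Definition cross u v : pt :=
  row3 (u 0 i1 * v 0 i2 - u 0 i2 * v 0 i1)
       (u 0 i2 * v 0 i0 - u 0 i0 * v 0 i2)
       (u 0 i0 * v 0 i1 - u 0 i1 * v 0 i0).

Ltac coords := rewrite ?dotvE; do 3 rewrite ?mxE /cross ?row3_0 ?row3_1 ?row3_2.
Ltac vec_ring := first [apply: row3P; coords; ring | coords; ring].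

Lemma dotvC u v : dotv u v = dotv v u. Proof. vec_ring. Qed.
Lemma dotvZl k u v : dotv (k *: u) v = k * dotv u v. Proof. vec_ring. Qed.
Lemma dotvDr w u v : dotv w (u + v) = dotv w u + dotv w v. Proof. vec_ring. Qed.
Lemma dotvBr w u v : dotv w (u - v) = dotv w u - dotv w v. Proof. vec_ring. Qed.
Lemma dot0v u : dotv 0 u = 0. Proof. vec_ring. Qed.
Lemma dotv_crossl u v : dotv (cross u v) u = 0. Proof. vec_ring. Qed.
Lemma dotv_crossr u v : dotv (cross u v) v = 0. Proof. vec_ring. Qed.
Lemma dotv_cross_cross u v w : dotv (cross u v) w = dotv (cross v w) u.
Proof. vec_ring. Qed.
Lemma dotv_cross_self u v :
  dotv (cross u v) (cross u v) = dotv u u * dotv v v - dotv u v ^+ 2.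
Proof. vec_ring. Qed.
Lemma cross_crossr u v w : cross u (cross v w) = dotv u w *: v - dotv u v *: w.
Proof. vec_ring. Qed.
Lemma cross0v u : cross 0 u = 0. Proof. vec_ring. Qed.
Lemma crossC u v : cross u v = - cross v u. Proof. vec_ring. Qed.
Lemma cross_eq0_collinear u v : cross u v = 0 -> dotv v v *: u = dotv u v *: v.
Proof.
move=> uv0; apply/eqP; rewrite -subr_eq0 [dotv u v]dotvC -cross_crossr uv0.
by apply/eqP; vec_ring.
Qed.

Lemma dotv_gt0 u : u != 0 -> 0 < dotv u u.
Proof.
move=> u_neq0; rewrite lt_def; apply/andP; split; last by coords; nra.
apply: contra u_neq0; coords => /eqP uu0; apply/eqP/row3P; coords; nra.
Qed.

Lemma dotv_eq0 u : (dotv u u == 0) = (u == 0).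
Proof.
by apply/idP/idP => [|/eqP->]; [apply: contraLR => /dotv_gt0/gt_eqF->|rewrite dot0v].
Qed.

Lemma cross_cross_eq0 u v w : dotv u v = 0 -> dotv u w = 0 -> cross u (cross v w) = 0.
Proof. by move=> uv0 uw0; rewrite cross_crossr uv0 uw0 !scale0r subrr. Qed.

Lemma dotvBr_eq0 w x y : dotv w (y - x) = 0 -> dotv w y = dotv w x.
Proof. by rewrite dotvBr => /eqP; rewrite subr_eq0 => /eqP. Qed.

Lemma cross_neq0 u v : u != 0 -> v != 0 -> dotv u v = 0 -> cross u v != 0.
Proof.
move=> u_neq0 v_neq0 uv0; rewrite -dotv_eq0 dotv_cross_self uv0 expr0n subr0.
by rewrite mulf_neq0 // dotv_eq0.
Qed.

Definition par u v := exists k, k != 0 /\ u = k *: v.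

Lemma cross_eq0_par u v : u != 0 -> v != 0 -> cross u v = 0 -> par u v.
Proof.
move=> u_neq0 v_neq0 /cross_eq0_collinear uvE.
have vv_neq0 : dotv v v != 0 by rewrite dotv_eq0.
have uv_neq0 : dotv u v != 0.
  apply: contra u_neq0 => /eqP uv0.
  by move: uvE; rewrite uv0 scale0r => /eqP; rewrite scaler_eq0 (negbTE vv_neq0).
exists (dotv u v / dotv v v); split; first by rewrite mulf_neq0 ?invr_eq0.
by rewrite mulrC -scalerA -uvE scalerA mulVf // scale1r.
Qed.

Lemma par_dotv0 u v w : par u v -> (dotv u w = 0 <-> dotv v w = 0).
Proof.
case=> k [k_neq0 ->]; rewrite dotvZl; split=> [/eqP|->]; last by rewrite mulr0.
by rewrite mulf_eq0 (negbTE k_neq0) => /eqP.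
Qed.

End Vec3.

Section Planes.
Variable R : realType.
Notation pt := 'rV[R]_3.
Implicit Types (n m x y : pt) (G : pt -> Prop).

Definition is_normal G n := n != 0 /\ exists c, forall x, G x <-> hyperplane n c x.

Lemma is_normal_hyperplane n c : n != 0 -> is_normal (hyperplane n c) n.
Proof. by move=> n_neq0; split=> //; exists c. Qed.

Lemma is_normal_orth G n x y : is_normal G n -> G x -> G y -> dotv n (y - x) = 0.
Proof.
by case=> _ [c Gn] /Gn Gx /Gn Gy; rewrite dotvBr /hyperplane Gx Gy subrr.
Qed.

(* Both [x0] and [x0 + (m x n) x m] lie in [G], so [n] is orthogonal to [(m x n) x m],
   i.e. [|m x n|^2 = 0]. *)
Lemma is_normal_par G m n : is_normal G m -> is_normal G n -> par n m.
Proof.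
move=> Gm Gn; have [m_neq0 [c Gc]] := Gm; have [n_neq0 _] := Gn.
have mm_neq0 : dotv m m != 0 by rewrite dotv_eq0.
set x0 := (c / dotv m m) *: m; set e := cross m n.
have Gx0 : G x0 by apply/Gc; rewrite /hyperplane dotvC dotvZl mulfVK.
have Gx1 : G (x0 + cross e m).
  by apply/Gc; rewrite /hyperplane dotvDr [dotv m (cross _ _)]dotvC dotv_crossr addr0; apply/Gc.
have := is_normal_orth Gn Gx0 Gx1; rewrite addrC addKr dotvC dotv_cross_cross => /eqP.
rewrite dotv_eq0 => /eqP mn0.
by apply: cross_eq0_par; rewrite // crossC mn0 oppr0.
Qed.

Lemma is_normal_par_hyperplane G m n b :
  is_normal G m -> par m n -> G b -> forall x, G x <-> hyperplane n (dotv n b) x.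
Proof.
case=> _ [c Gc] [k [k_neq0 mE]] /Gc Gb x; rewrite Gc /hyperplane -Gb mE !dotvZl.
by split=> [/(mulfI k_neq0)|->].
Qed.

Lemma orth_planesE G1 G2 :
  orth_planes G1 G2 <-> exists n1 n2, [/\ is_normal G1 n1, is_normal G2 n2 & dotv n1 n2 = 0].
Proof.
split=> [[n1 [c1 [n2 [c2 [n1_neq0 n2_neq0 G1n1 G2n2 n12]]]]]|].
  by exists n1, n2; split=> //; split=> //; [exists c1|exists c2].
by case=> [n1 [n2 [[n1_neq0 [c1 G1n1]] [n2_neq0 [c2 G2n2]] n12]]]; exists n1, c1, n2, c2.
Qed.

Lemma orth_planes_normal G1 G2 n1 n2 :
  orth_planes G1 G2 -> is_normal G1 n1 -> is_normal G2 n2 -> dotv n1 n2 = 0.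
Proof.
case/orth_planesE=> [m1 [m2 [G1m1 G2m2 m12]]] G1n1 G2n2.
apply/(par_dotv0 _ (is_normal_par G1m1 G1n1)); rewrite dotvC.
by apply/(par_dotv0 _ (is_normal_par G2m2 G2n2)); rewrite dotvC m12.
Qed.

End Planes.

Section GeneralPosition.
Variable R : realType.
Notation pt := 'rV[R]_3.
Implicit Types (X : seq pt) (p q r a b c x y z : pt).

Lemma gp_noncollinear X x y z : general_position X ->
  uniq [:: x; y; z] -> {subset [:: x; y; z] <= X} -> cross (y - x) (z - x) != 0.
Proof.
case=> _ gp_line _ _ _ xyz_uniq xyz_sub; apply/eqP => xyz0.
have d_neq0 : y - x != 0.
  by move: xyz_uniq; rewrite /= !inE subr_eq0 eq_sym => /andP[/norP[]].
have dd_neq0 : dotv (y - x) (y - x) != 0 by rewrite dotv_eq0.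
apply: (gp_line (fun t => exists s, t = x + s *: (y - x)) _ _ xyz_uniq erefl xyz_sub).
  by exists x, (y - x).
move=> t; rewrite !inE => /or3P[] /eqP->.
- by exists 0; rewrite scale0r addr0.
- by exists 1; rewrite scale1r addrC subrK.
- exists (dotv (z - x) (y - x) / dotv (y - x) (y - x)).
  have /cross_eq0_collinear zxE : cross (z - x) (y - x) = 0 by rewrite crossC xyz0 oppr0.
  by rewrite mulrC -scalerA -zxE scalerA mulVf // scale1r addrC subrK.
Qed.

Lemma gp_normal_not_parallel p q r a b c :
  general_position [:: p; q; r; a; b; c] ->
  cross (cross (q - p) (r - p)) (b - a) != 0.
Proof.
move=> gp; have [X_uniq _ _ gp_orth _] := gp.
have := X_uniq; rewrite -[[:: p; q; r; a; b; c]]/([:: p; q; r] ++ [:: a; b; c]) cat_uniq.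
case/and3P=> pqr_uniq _ abc_uniq.
have in_X t : t \in [:: p; q; r] ++ [:: a; b; c] -> t \in [:: p; q; r; a; b; c] by [].
have N_neq0 : cross (q - p) (r - p) != 0.
  by apply: (gp_noncollinear gp pqr_uniq) => t t3; apply: in_X; rewrite mem_cat t3.
have d_neq0 : cross (b - a) (c - a) != 0.
  by apply: (gp_noncollinear gp abc_uniq) => t t3; apply: in_X; rewrite mem_cat t3 orbT.
have ba_neq0 : b - a != 0.
  by move: abc_uniq; rewrite /= !inE subr_eq0 eq_sym => /andP[/norP[]].
set N := cross (q - p) (r - p) in N_neq0 *; set d := cross (b - a) (c - a) in d_neq0.
apply/eqP => Nba0; have Npar := cross_eq0_par N_neq0 ba_neq0 Nba0.
apply: (gp_orth (hyperplane N (dotv N p)) (hyperplane d (dotv d a)) _ _ X_uniq erefl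
  (fun t t6 => t6)).
  exists N, (dotv N p), d, (dotv d a); split=> //.
  by apply/(par_dotv0 _ Npar); rewrite dotvC dotv_crossl.
move=> t; rewrite !inE => /or4P[|||/or3P[||]] /eqP->;
  [left|left|left|right|right|right]; rewrite // /hyperplane; apply: dotvBr_eq0;
  by rewrite ?dotv_crossl ?dotv_crossr.
Qed.

End GeneralPosition.

Section Frame.
Variable R : realType.
Notation pt := 'rV[R]_3.
Variables p q r a b c : pt.

Let N := cross (q - p) (r - p).
Let n2 := cross N (b - a).
Let n3 := cross N n2.

Hypotheses (N_neq0 : N != 0) (n2_neq0 : n2 != 0).

Definition frame1 := hyperplane N (dotv N p).
Definition frame2 := hyperplane n2 (dotv n2 a).
Definition frame3 := hyperplane n3 (dotv n3 c).

Let n3_neq0 : n3 != 0.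
Proof. by apply: cross_neq0; rewrite // dotvC dotv_crossl. Qed.

Lemma frame_mutually_orth : mutually_orth3 frame1 frame2 frame3.
Proof.
split; apply/orth_planesE.
- by exists N, n2; split; [exact: is_normal_hyperplane..|rewrite dotvC dotv_crossl].
- by exists N, n3; split; [exact: is_normal_hyperplane..|rewrite dotvC dotv_crossl].
- by exists n2, n3; split; [exact: is_normal_hyperplane..|rewrite dotvC dotv_crossr].
Qed.

Lemma frame1_contains : {in [:: p; q; r], forall x, frame1 x}.
Proof.
move=> x; rewrite !inE => /or3P[]/eqP-> //; apply: dotvBr_eq0.
  exact: dotv_crossl.
exact: dotv_crossr.
Qed.

Lemma frame2_contains : {in [:: a; b], forall x, frame2 x}.
Proof. by move=> x; rewrite !inE => /orP[]/eqP-> //; apply/dotvBr_eq0/dotv_crossr. Qed.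

Lemma frame3_contains : {in [:: c], forall x, frame3 x}.
Proof. by move=> x; rewrite inE => /eqP->. Qed.

Lemma frame_unique G1 G2 G3 : mutually_orth3 G1 G2 G3 ->
  {in [:: p; q; r], forall x, G1 x} -> {in [:: a; b], forall x, G2 x} ->
  {in [:: c], forall x, G3 x} ->
  forall x, [/\ G1 x <-> frame1 x, G2 x <-> frame2 x & G3 x <-> frame3 x].
Proof.
case=> o12 o13 o23 G1pqr G2ab G3_c.
have G1p : G1 p by apply: G1pqr; rewrite !inE eqxx.
have G2a : G2 a by apply: G2ab; rewrite !inE eqxx.
have G3c : G3 c by apply: G3_c; rewrite !inE eqxx.
case/orth_planesE: (o12) => m1 [m2 [G1m1 G2m2 m12]].
case/orth_planesE: (o13) => _ [m3 [_ G3m3 _]].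
have m13 := orth_planes_normal o13 G1m1 G3m3.
have m23 := orth_planes_normal o23 G2m2 G3m3.
have m1N : par m1 N.
  apply: cross_eq0_par G1m1.1 N_neq0 _; apply: cross_cross_eq0;
    by apply: (is_normal_orth G1m1); apply: G1pqr; rewrite !inE eqxx ?orbT.
have m2n2 : par m2 n2.
  apply: cross_eq0_par G2m2.1 n2_neq0 _; apply: cross_cross_eq0.
    by rewrite dotvC; apply/(par_dotv0 _ m1N); exact: m12.
  by apply: (is_normal_orth G2m2); apply: G2ab; rewrite !inE eqxx ?orbT.
have m3n3 : par m3 n3.
  apply: cross_eq0_par G3m3.1 n3_neq0 _; apply: cross_cross_eq0; rewrite dotvC.
    by apply/(par_dotv0 _ m1N); exact: m13.
  by apply/(par_dotv0 _ m2n2); exact: m23.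
move=> x; split.
- exact: (is_normal_par_hyperplane G1m1 m1N G1p).
- exact: (is_normal_par_hyperplane G2m2 m2n2 G2a).
- exact: (is_normal_par_hyperplane G3m3 m3n3 G3c).
Qed.

End Frame.

Theorem mainTheorem7 (R : realType) (A1 A2 A3 : seq 'rV[R]_3) :
  uniq A1 -> uniq A2 -> uniq A3 ->
  size A1 = 3%N -> size A2 = 2%N -> size A3 = 1%N ->
  size (A1 ++ A2 ++ A3) = 6%N ->
  general_position (A1 ++ A2 ++ A3) ->
  exists H1 H2 H3 : 'rV[R]_3 -> Prop,
    [/\ mutually_orth3 H1 H2 H3,
        (forall a, a \in A1 -> H1 a),
        (forall a, a \in A2 -> H2 a),
        (forall a, a \in A3 -> H3 a)
      & forall G1 G2 G3 : 'rV[R]_3 -> Prop,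
          mutually_orth3 G1 G2 G3 ->
          (forall a, a \in A1 -> G1 a) ->
          (forall a, a \in A2 -> G2 a) ->
          (forall a, a \in A3 -> G3 a) ->
          forall x, [/\ G1 x <-> H1 x, G2 x <-> H2 x & G3 x <-> H3 x]].
Proof.
move=> _ _ _ + + + _.
case: A1 => [|p [|q [|r [|? ?]]]] //; case: A2 => [|a [|b [|? ?]]] //.
case: A3 => [|c [|? ?]] // _ _ _ gp.
have n2_neq0 := gp_normal_not_parallel gp.
have N_neq0 : cross (q - p) (r - p) != 0.
  by apply: contraNneq n2_neq0 => ->; rewrite cross0v.
exists (frame1 p q r), (frame2 p q r a b), (frame3 p q r a b c); split.
- exact: frame_mutually_orth.
- exact: frame1_contains.
- exact: frame2_contains.
- exact: frame3_contains.
- exact: frame_unique.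
Qed.
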